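(* Let $R$ be a ring with identity and $a,b,c\in R$. Then: (i) $a$ is $(b,c)$-invertible if and only if $a$ is both left and right $(b,c)$-invertible; (ii) $a$ is $(b,c)$-invertible if and only if $b$ and $c$ are regular and $a$ is both left annihilator and right annihilator $(b,c)$-invertible.
   Context: An element $x$ is regular if $x=xzx$ for some $z\in R$. For $x\in R$: $xR=\{xr:r\in R\}$, $Rx=\{rx:r\in R\}$, $x^\circ=\{r: xr=0\}$, ${}^\circ x=\{r: rx=0\}$. $a$ is $(b,c)$-invertible if there is $y\in R$ with $y\in (bRy)\cap(yRc)$, $yab=b$ and $cay=c$. $a$ is left $(b,c)$-invertible if there is $y$ with $Ry\subseteq Rc$ and $yab=b$; right $(b,c)$-invertible if there is $y$ with $yR\subseteq bR$ and $cay=c$; right annihilator $(b,c)$-invertible if there is $y$ with $c^\circ\subseteq y^\circ$ and $yab=b$; left annihilator $(b,c)$-invertible if there is $y$ with ${}^\circ b\subseteq {}^\circ y$ and $cay=c$. *)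

From mathcomp Require Import all_boot all_algebra.
Set Implicit Arguments. Unset Strict Implicit. Unset Printing Implicit Defensive.
Import GRing.Theory.
Local Open Scope ring_scope.

Section Defs.
Variable R : pzRingType.

Definition regular (x : R) : Prop := exists z : R, x = x * z * x.

Definition rideal (x : R) : R -> Prop := fun t => exists r : R, t = x * r.
Definition lideal (x : R) : R -> Prop := fun t => exists r : R, t = r * x.

Definition rann (x : R) : R -> Prop := fun r => x * r = 0.
Definition lann (x : R) : R -> Prop := fun r => r * x = 0.

Definition bc_inverse (a b c y : R) : Prop :=
  [/\ (exists r : R, y = b * r * y), (exists s : R, y = y * s * c),
      y * a * b = b & c * a * y = c].

Definition bc_invertible (a b c : R) : Prop := exists y : R, bc_inverse a b c y.

Definition left_bc_invertible (a b c : R) : Prop :=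
  exists y : R, (forall t, lideal y t -> lideal c t) /\ y * a * b = b.

Definition right_bc_invertible (a b c : R) : Prop :=
  exists y : R, (forall t, rideal y t -> rideal b t) /\ c * a * y = c.

Definition right_ann_bc_invertible (a b c : R) : Prop :=
  exists y : R, (forall r, rann c r -> rann y r) /\ y * a * b = b.

Definition left_ann_bc_invertible (a b c : R) : Prop :=
  exists y : R, (forall r, lann b r -> lann y r) /\ c * a * y = c.

End Defs.

(* If [y1 a b = b] with [y1 ∈ Rc] and [c a y2 = c] with [y2 ∈ bR], then
   [y1 = y1 a y2 = y2], and this common element is a (b,c)-inverse of [a].
   For (ii), regularity [c = c w c] makes [1 - w c] lie in [c°], so the
   inclusion [c° ⊆ y°] yields [y = y w c ∈ Rc]; dually [°b ⊆ °y] yields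
   [y ∈ bR], reducing (ii) to the same criterion. *)
From mathcomp Require Import all_boot all_algebra.
Set Implicit Arguments. Unset Strict Implicit.
Import GRing.Theory.
Local Open Scope ring_scope.

Section BcInverse.
Variables (R : pzRingType) (a b c : R).

Lemma bc_invertible_of_one_sided (y1 y2 : R) :
  lideal c y1 -> rideal b y2 -> y1 * a * b = b -> c * a * y2 = c ->
  bc_invertible a b c.
Proof.
move=> [u ->] [v ->] y1ab cay2.
have y1E : u * c = u * c * a * (b * v) by rewrite -[in LHS]cay2 !mulrA.
have y2E : b * v = u * c * a * (b * v) by rewrite -[in LHS]y1ab !mulrA.
have y12 : u * c = b * v by rewrite y1E -y2E.
have yay : b * v * a * (b * v) = b * v by rewrite -{1}y12 -y1E.
exists (b * v); split.
- by exists (v * a); rewrite -{1}yay !mulrA.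
- by exists (a * u); rewrite -{1}yay -{2}y12 !mulrA.
- by rewrite -y12.
- by [].
Qed.

Lemma lideal_id (y : R) : lideal y y.
Proof. by exists 1; rewrite mul1r. Qed.

Lemma rideal_id (y : R) : rideal y y.
Proof. by exists 1; rewrite mulr1. Qed.

Lemma lideal_of_rann_sub (w y : R) : c = c * w * c ->
  (forall r, rann c r -> rann y r) -> lideal c y.
Proof.
move=> cwc cy; exists (y * w); apply/eqP; rewrite -subr_eq0.
rewrite -mulrA -{1}(mulr1 y) -mulrBr; apply/eqP/cy.
by rewrite /rann mulrBr mulr1 mulrA -cwc subrr.
Qed.

Lemma rideal_of_lann_sub (z y : R) : b = b * z * b ->
  (forall r, lann b r -> lann y r) -> rideal b y.
Proof.
move=> bzb by_; exists (z * y); apply/eqP; rewrite -subr_eq0 mulrA.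
rewrite -{1}(mul1r y) -mulrBl; apply/eqP/by_.
by rewrite /lann mulrBl mul1r -bzb subrr.
Qed.

Variable y : R.
Hypothesis yinv : bc_inverse a b c y.

Lemma bc_inverse_left : left_bc_invertible a b c.
Proof.
case: yinv => _ [s ys] yab _; exists y; split=> // t [q ->].
by exists (q * y * s); rewrite {1}ys !mulrA.
Qed.

Lemma bc_inverse_right : right_bc_invertible a b c.
Proof.
case: yinv => [[r yr] _ _ cay]; exists y; split=> // t [q ->].
by exists (r * y * q); rewrite {1}yr !mulrA.
Qed.

Lemma bc_inverse_regularb : regular b.
Proof.
case: yinv => [[r yr] _ yab _]; exists (r * y * a).
by rewrite -{1}yab {1}yr !mulrA.
Qed.

Lemma bc_inverse_regularc : regular c.
Proof.
case: yinv => [_ [s ys] _ cay]; exists (a * y * s).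
by rewrite -{1}cay {1}ys !mulrA.
Qed.

Lemma bc_inverse_left_ann : left_ann_bc_invertible a b c.
Proof.
case: yinv => [[r yr] _ _ cay]; exists y; split=> // q qb.
by rewrite /lann yr !mulrA qb !mul0r.
Qed.

Lemma bc_inverse_right_ann : right_ann_bc_invertible a b c.
Proof.
case: yinv => [_ [s ys] yab _]; exists y; split=> // q cq.
by rewrite /rann ys -!mulrA cq !mulr0.
Qed.

End BcInverse.

Theorem corollary2p7 (R : pzRingType) (a b c : R) :
  (bc_invertible a b c <->
     left_bc_invertible a b c /\ right_bc_invertible a b c) /\
  (bc_invertible a b c <->
     [/\ regular b, regular c, left_ann_bc_invertible a b c
       & right_ann_bc_invertible a b c]).
Proof.
split; split.
- move=> [y yinv]; split.
  + exact: bc_inverse_left yinv.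
  + exact: bc_inverse_right yinv.
- move=> [[y1 [y1Rc y1ab]] [y2 [y2bR cay2]]].
  exact: (bc_invertible_of_one_sided (y1Rc _ (lideal_id _))
                                     (y2bR _ (rideal_id _)) y1ab cay2).
- move=> [y yinv]; split.
  + exact: bc_inverse_regularb yinv.
  + exact: bc_inverse_regularc yinv.
  + exact: bc_inverse_left_ann yinv.
  + exact: bc_inverse_right_ann yinv.
- move=> [[z bzb] [w cwc] [y2 [by2 cay2]] [y1 [cy1 y1ab]]].
  exact: (bc_invertible_of_one_sided (lideal_of_rann_sub cwc cy1)
                                     (rideal_of_lann_sub bzb by2) y1ab cay2).
Qed.
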